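(* Fix $\varepsilon\in(0,\tfrac12)$ and let $r=r(n)>0$ with $r=o(\sqrt n)$. There is $n_0$ such that for all $n\ge n_0$ the following deterministic statement holds. Let $G$ be a graph on a finite vertex set $V$, let $(\mathbf X_v)_{v\in V}$ be points of $\mathcal S_n$, let $v_1,\dots,v_4\in V$ be distinct, and put $V^-=V\setminus\{v_1,\dots,v_4\}$. Suppose that for every $i\in\{1,2,3,4\}$ and every $v\in V^-$, $$r\big(d_G(v,v_i)+\varepsilon/3\big)\ \ge\ \|\mathbf X_v-c_i\|_2\ \ge\ r\big(d_G(v,v_i)-(1+\varepsilon/3)\big).$$ Then for every $j\in\{1,2,3,4\}$ and every $v\in V^-$ with $d_G(v,v_j)=\min_{1\le i\le4}d_G(v,v_i)$, the point $\mathbf X_v$ lies within Euclidean distance at most $r$ of the quarter $Q(n,j)$.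
   Context: $\mathcal S_n=[-\sqrt n/2,\sqrt n/2]^2$ with corners $c_1=(-\sqrt n/2,-\sqrt n/2)$, $c_2=(-\sqrt n/2,\sqrt n/2)$, $c_3=(\sqrt n/2,\sqrt n/2)$, $c_4=(\sqrt n/2,-\sqrt n/2)$. $Q(n,j)$ is the closed quarter of $\mathcal S_n$ (one of the four $\tfrac{\sqrt n}{2}\times\tfrac{\sqrt n}{2}$ subsquares having the origin as a corner) containing $c_j$. $d_G$ denotes graph distance in $G$. *)

From Stdlib Require Import Reals Lra Lia List.
Open Scope R_scope.

Definition pt := (R * R)%type.

Definition dist2 (p q : pt) : R :=
  sqrt ((fst p - fst q)^2 + (snd p - snd q)^2).

Definition hs (n : nat) : R := sqrt (INR n) / 2.

Definition in_Sn (n : nat) (p : pt) : Prop :=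
  - hs n <= fst p <= hs n /\ - hs n <= snd p <= hs n.

Definition corner (n : nat) (j : nat) : pt :=
  match j with
  | 1%nat => (- hs n, - hs n)
  | 2%nat => (- hs n, hs n)
  | 3%nat => (hs n, hs n)
  | _ => (hs n, - hs n)
  end.

Definition in_quarter (n : nat) (j : nat) (p : pt) : Prop :=
  match j with
  | 1%nat => - hs n <= fst p <= 0 /\ - hs n <= snd p <= 0
  | 2%nat => - hs n <= fst p <= 0 /\ 0 <= snd p <= hs n
  | 3%nat => 0 <= fst p <= hs n /\ 0 <= snd p <= hs n
  | _ => 0 <= fst p <= hs n /\ - hs n <= snd p <= 0
  end.

(* Euclidean distance from p to Q(n,j) is at most r (Q is compact, so the
   infimum is attained) *)
Definition near_quarter (n j : nat) (r : R) (p : pt) : Prop :=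
  exists q, in_quarter n j q /\ dist2 p q <= r.

Definition finite_type (V : Type) : Prop := exists l : list V, forall v, In v l.
Definition simple_graph {V : Type} (adj : V -> V -> Prop) : Prop :=
  (forall u v, adj u v -> adj v u) /\ (forall u, ~ adj u u).

Inductive walk {V : Type} (adj : V -> V -> Prop) : nat -> V -> V -> Prop :=
| walk0 : forall u, walk adj 0 u u
| walkS : forall k u v w, adj u v -> walk adj k v w -> walk adj (S k) u w.

(* graph distance: d_G(u,w) = k (finite); if no such k, d_G(u,w) = infinity *)
Definition gdist {V : Type} (adj : V -> V -> Prop) (u w : V) (k : nat) : Prop :=
  walk adj k u w /\ forall m, walk adj m u w -> (k <= m)%nat.

Definition little_o_sqrt (r : nat -> R) : Prop :=
  forall d, 0 < d -> exists N, forall n, (N <= n)%nat -> Rabs (r n) <= d * sqrt (INR n).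

(* If X_v is closest (in graph distance) to v_j, the hypotheses force
   |X_v - c_j| - |X_v - c_i| <= r (1 + 2 eps/3) < 4r/3 for every corner c_i.
   For two corners c, c' of the square of half side h that differ in one
   coordinate, |X - c|^2 - |X - c'|^2 = 4 h s, where s is the (signed) excess
   of X beyond the axis separating them; when X lies on the wrong side of that
   axis, |X - c'| <= sqrt 2 h, so 4 h s <= (4r/3)(2 sqrt 2 h + 4r/3), i.e.
   s < r once h >= 100 r.  The diagonal corner handles the case where both
   coordinates are on the wrong side, and reflections reduce every quarter to
   the lower-left one. *)
From Stdlib Require Import Reals Lra Lia List.
Open Scope R_scope.

Lemma dist2_nonneg (p q : pt) : 0 <= dist2 p q.
Proof. apply sqrt_pos. Qed.

Lemma dist2_sqr (p q : pt) :
  dist2 p q * dist2 p q = (fst p - fst q) ^ 2 + (snd p - snd q) ^ 2.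
Proof. apply sqrt_sqrt, Rplus_le_le_0_compat; apply pow2_ge_0. Qed.

Lemma dist2_le (p q : pt) (r : R) :
  0 <= r -> (fst p - fst q) ^ 2 + (snd p - snd q) ^ 2 <= r ^ 2 -> dist2 p q <= r.
Proof.
  intros Hr Hsq. rewrite <- (sqrt_pow2 r Hr). apply sqrt_le_1_alt. exact Hsq.
Qed.

Lemma shift_le_of_dist_gap (A B h s d r : R) :
  0 <= A -> 0 <= B -> A * A = B * B + 4 * h * s -> B * B <= 2 * h * h ->
  A - B <= d -> 0 <= d <= 4 * r / 3 -> 0 < r -> 100 * r <= h ->
  s <= r.
Proof.
  intros HA HB HAB HB2 Hgap [Hd0 Hd] Hr Hh.
  assert (HBh : B <= 142 / 100 * h).
  { destruct (Rle_lt_dec B (142 / 100 * h)) as [|HB']; [assumption | nra]. }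
  assert (H4hs : 4 * h * s <= 2 * B * d + d * d) by nra.
  assert (H2Bd : 2 * B * d <= 284 / 100 * h * d) by nra.
  assert (Hdd : d * d <= d * (4 * h / 300)) by nra.
  assert (s <= d * 7134 / 10000) by nra.
  lra.
Qed.

Lemma near_lower_left_quarter (h r d : R) (p : pt) :
  0 < r -> 100 * r <= h -> 0 <= d <= 4 * r / 3 ->
  -h <= fst p <= h -> -h <= snd p <= h ->
  (forall c : pt, fst c = h \/ fst c = -h -> snd c = h \/ snd c = -h ->
     dist2 p (-h, -h) - dist2 p c <= d) ->
  exists q : pt, (-h <= fst q <= 0 /\ -h <= snd q <= 0) /\ dist2 p q <= r.
Proof.
  destruct p as [x y]; simpl. intros Hr Hh Hd Hx Hy Hgap.
  set (A := dist2 (x, y) (-h, -h)).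
  assert (EA := dist2_sqr (x, y) (-h, -h)); fold A in EA; simpl in EA.
  assert (PA := dist2_nonneg (x, y) (-h, -h)); fold A in PA.
  (* compare with the corner that differs from (-h,-h) exactly where (x,y) is
     on the wrong side *)
  assert (Hshift : forall c : pt, fst c = h \/ fst c = -h -> snd c = h \/ snd c = -h ->
            forall s, A * A = dist2 (x, y) c * dist2 (x, y) c + 4 * h * s ->
            dist2 (x, y) c * dist2 (x, y) c <= 2 * h * h -> s <= r).
  { intros c Hc1 Hc2 s Hs HB.
    apply (shift_le_of_dist_gap A (dist2 (x, y) c) h s d r);
      auto using dist2_nonneg. }
  destruct (Rle_lt_dec x 0) as [Hx0|Hx0]; destruct (Rle_lt_dec y 0) as [Hy0|Hy0].
  - exists (x, y). split; [simpl; lra|].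
    apply dist2_le; simpl; nra.
  - assert (y <= r).
    { apply (Hshift (-h, h)); simpl; try lra; rewrite dist2_sqr; simpl; nra. }
    exists (x, 0). split; [simpl; lra|]. apply dist2_le; simpl; nra.
  - assert (x <= r).
    { apply (Hshift (h, -h)); simpl; try lra; rewrite dist2_sqr; simpl; nra. }
    exists (0, y). split; [simpl; lra|]. apply dist2_le; simpl; nra.
  - assert (x + y <= r).
    { apply (Hshift (h, h)); simpl; try lra; rewrite dist2_sqr; simpl; nra. }
    exists (0, 0). split; [simpl; lra|]. apply dist2_le; simpl; nra.
Qed.

Definition refl (b : bool) (x : R) : R := if b then - x else x.

Definition reflp (fx fy : bool) (p : pt) : pt := (refl fx (fst p), refl fy (snd p)).

Lemma refl_involutive (b : bool) (x : R) : refl b (refl b x) = x.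
Proof. destruct b; simpl; ring. Qed.

Lemma dist2_reflp (fx fy : bool) (p q : pt) :
  dist2 (reflp fx fy p) q = dist2 p (reflp fx fy q).
Proof. unfold dist2, reflp, refl; destruct fx, fy; simpl; f_equal; ring. Qed.

Lemma refl_pm (b : bool) (h x : R) : x = h \/ x = - h -> refl b x = h \/ refl b x = - h.
Proof. destruct b; simpl; lra. Qed.

Lemma near_reflected_quarter (fx fy : bool) (h r d : R) (p : pt) :
  0 < r -> 100 * r <= h -> 0 <= d <= 4 * r / 3 ->
  -h <= fst p <= h -> -h <= snd p <= h ->
  (forall c : pt, fst c = h \/ fst c = -h -> snd c = h \/ snd c = -h ->
     dist2 p (reflp fx fy (-h, -h)) - dist2 p c <= d) ->
  exists q : pt, (-h <= refl fx (fst q) <= 0 /\ -h <= refl fy (snd q) <= 0)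
                 /\ dist2 p q <= r.
Proof.
  intros Hr Hh Hd Hx Hy Hgap.
  destruct (near_lower_left_quarter h r d (reflp fx fy p)) as [q [Hq Hpq]];
    auto; try (unfold refl; destruct fx, fy; simpl; lra).
  - intros c Hc1 Hc2. rewrite !dist2_reflp.
    apply Hgap; simpl; apply refl_pm; assumption.
  - exists (reflp fx fy q). simpl. rewrite !refl_involutive.
    split; [exact Hq|]. rewrite <- dist2_reflp. exact Hpq.
Qed.

Definition xflip (j : nat) : bool := match j with 1 | 2 => false | _ => true end%nat.
Definition yflip (j : nat) : bool := match j with 2 | 3 => true | _ => false end%nat.

Lemma corner_reflp (n j : nat) :
  corner n j = reflp (xflip j) (yflip j) (- hs n, - hs n).
Proof.
  unfold reflp, refl; simpl.
  destruct j as [|[|[|[|j]]]]; simpl; f_equal; ring.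
Qed.

Lemma in_quarter_reflp (n j : nat) (q : pt) :
  (- hs n <= refl (xflip j) (fst q) <= 0 /\ - hs n <= refl (yflip j) (snd q) <= 0) ->
  in_quarter n j q.
Proof. unfold refl; destruct j as [|[|[|[|j]]]]; simpl; lra. Qed.

Lemma corner_index (n : nat) (c : pt) :
  fst c = hs n \/ fst c = - hs n -> snd c = hs n \/ snd c = - hs n ->
  exists i, (1 <= i <= 4)%nat /\ c = corner n i.
Proof.
  destruct c as [x y]; simpl.
  intros [-> | ->] [-> | ->]; [exists 3%nat | exists 4%nat | exists 2%nat | exists 1%nat];
    split; auto; lia.
Qed.

Lemma near_quarter_of_corner_gaps (n j : nat) (r d : R) (p : pt) :
  0 < r -> 100 * r <= hs n -> 0 <= d <= 4 * r / 3 -> in_Sn n p ->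
  (forall i, (1 <= i <= 4)%nat -> dist2 p (corner n j) - dist2 p (corner n i) <= d) ->
  near_quarter n j r p.
Proof.
  intros Hr Hh Hd [Hx Hy] Hgap.
  destruct (near_reflected_quarter (xflip j) (yflip j) (hs n) r d p)
    as [q [Hq Hpq]]; auto.
  - intros c Hc1 Hc2. destruct (corner_index n c Hc1 Hc2) as [i [Hi ->]].
    rewrite <- corner_reflp. auto.
  - exists q. split; [apply in_quarter_reflp|]; assumption.
Qed.

Lemma gdist_unique {V : Type} (adj : V -> V -> Prop) (u w : V) (k k' : nat) :
  gdist adj u w k -> gdist adj u w k' -> k = k'.
Proof.
  intros [Hk Hkmin] [Hk' Hk'min].
  apply Nat.le_antisymm; [apply Hkmin | apply Hk'min]; assumption.
Qed.

Lemma dist_gap_le (r e A B : R) (kj ki : nat) :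
  0 < r -> (kj <= ki)%nat ->
  r * (INR kj + e) >= A -> B >= r * (INR ki - (1 + e)) ->
  A - B <= r * (1 + 2 * e).
Proof.
  intros Hr Hk HA HB.
  assert (Hkr : r * INR kj <= r * INR ki)
    by (apply Rmult_le_compat_l; [lra | apply le_INR; exact Hk]).
  nra.
Qed.

Theorem lemma4p1 (eps : R) (r : nat -> R) :
  0 < eps < 1/2 ->
  (forall n, 0 < r n) ->
  little_o_sqrt r ->
  exists n0 : nat, forall n : nat, (n0 <= n)%nat ->
  forall (V : Type) (adj : V -> V -> Prop) (X : V -> pt) (vs : nat -> V),
    finite_type V ->
    simple_graph adj ->
    (forall v, in_Sn n (X v)) ->
    (forall i j, (1 <= i <= 4)%nat -> (1 <= j <= 4)%nat -> i <> j -> vs i <> vs j) ->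
    (forall i v, (1 <= i <= 4)%nat -> (forall l, (1 <= l <= 4)%nat -> v <> vs l) ->
       exists k, gdist adj v (vs i) k /\
         r n * (INR k + eps / 3) >= dist2 (X v) (corner n i) /\
         dist2 (X v) (corner n i) >= r n * (INR k - (1 + eps / 3))) ->
    forall j v, (1 <= j <= 4)%nat -> (forall l, (1 <= l <= 4)%nat -> v <> vs l) ->
    forall kj, gdist adj v (vs j) kj ->
    (forall i ki, (1 <= i <= 4)%nat -> gdist adj v (vs i) ki -> (kj <= ki)%nat) ->
    near_quarter n j (r n) (X v).
Proof.
  intros Heps Hrpos Ho.
  destruct (Ho (1 / 200)) as [N HN]; [lra|].
  exists N. intros n Hn V adj X vs _ _ HS _ Hbounds j v Hj Hv kj Hkj Hmin.
  pose proof (Hrpos n) as Hr.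
  assert (Hh : 100 * r n <= hs n).
  { specialize (HN n Hn). rewrite Rabs_right in HN by lra. unfold hs. lra. }
  apply near_quarter_of_corner_gaps with (d := r n * (1 + 2 * (eps / 3))); auto.
  - split; nra.
  - intros i Hi.
    destruct (Hbounds j v Hj Hv) as [kj' [Hkj' [Hup _]]].
    rewrite (gdist_unique adj v (vs j) kj' kj Hkj' Hkj) in Hup.
    destruct (Hbounds i v Hi Hv) as [ki [Hki [_ Hlow]]].
    exact (dist_gap_le (r n) (eps / 3) _ _ kj ki Hr (Hmin i ki Hi Hki) Hup Hlow).
Qed.
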